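(* Let $\mathcal N=\{N_1,\ldots,N_\ell\}$ ($\ell\ge4$) be a family of $k$-sets satisfying properties (i) and (ii) below, and fix any run of the decomposition process described in the context. Let $0\le j\le t$, $1\le i\le\ell_j$, $Y\subseteq N_i$ with $|Y|\le j$, and let $C$ be a $3$-element set with $C\subseteq\bigl(N_i\cup\{a_i^{(0)},\dots,a_i^{(j)}\}\bigr)\setminus Y$ and $C\cap(V\setminus N_r)\ne\varnothing$ for all $r=1,\dots,\ell$. Let $p=C\cap N_i$. Then: (a) $|p|=1$ or $|p|=2$; (b) if $|p|=1$, then the vertex $v$ of $p$ lies in $(N_i\setminus Y)\cap G$ and $v$ is private for $N_i$ at time $j$; (c) if $|p|=2$, then $p$ is a $2$-subset of $N_i\setminus Y$ and $p$ is a private pair for $N_i$ at time $j$.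
   Context: Setting: $k\ge3$, $\mathcal N=\{N_1,\dots,N_\ell\}$ a family of $k$-subsets, $V=\bigcup N_i$, $n=|V|$, $m=n-k$, satisfying (i) $\bigcap_{i}N_i=\varnothing$ but $\bigcap_{j\ne i}N_j\ne\varnothing$ for all $i$; (ii) every $S\subseteq V$ with $|S|\ge k+1$ contains a $3$-set $T$ not contained in any $N_i$. Assume $\ell\ge4$. Decomposition process: Stage $0$: $\ell_0=\ell$; for each $i\le\ell_0$ choose $a_i^{(0)}\in\bigcap_{r\ne i}N_r$; kernel $A^{(0)}=\{a_1^{(0)},\dots,a_{\ell_0}^{(0)}\}$. Having defined stages $0,\dots,j$ (with surviving sets $N_1,\dots,N_{\ell_j}$, $\ell_j\ge4$, and kernels $A^{(0)},\dots,A^{(j)}$), consider $R^{(j)}=\{N_r\setminus\bigcup_{s\le j}A^{(s)} : r\le\ell_j\}$, which has empty intersection. If every subfamily of $R^{(j)}$ minimal with respect to having empty intersection has only $2$ or $3$ members, stop and set $t=j$. Otherwise choose such a minimal subfamily with at least $4$ members; after reindexing assume it consists of the truncations $N_r^{(j+1)}=N_r\setminus\bigcup_{s\le j}A^{(s)}$, $r\le\ell_{j+1}$; choose $a_i^{(j+1)}\in\bigcap_{r\le\ell_{j+1},r\ne i}N_r^{(j+1)}$ for $i\le\ell_{j+1}$, and let $A^{(j+1)}$ be the set of these. Let $A=\bigcup_{s=0}^tA^{(s)}$ (kernel vertices) and $G=V\setminus A$ (garbage vertices). Privacy: for $i\le\ell_j$, a vertex $v\in N_i$ is private for $N_i$ at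 time $j$ if no $N_r$ with $r\le\ell_j$, $r\ne i$, contains $v$; a $2$-set $p\subseteq N_i$ is a private pair for $N_i$ at time $j$ if no $N_r$ with $r\le\ell_j$, $r\neq i$, contains $p$. *)

From mathcomp Require Import all_boot.
Set Implicit Arguments. Unset Strict Implicit. Unset Printing Implicit Defensive.

(* Indexing conventions (0-based): the family is N 0, ..., N (l-1) of sets of
   vertices of a finite type T.  A run of the decomposition process is given by
   t (the last stage), L : nat -> nat (L j = ell_j) and a : nat -> nat -> T
   (a j i = a_i^{(j)}, meaningful for j <= t, i < L j).  The reindexing of the
   process is global: the survivors at stage j+1 are N 0, ..., N (L (j+1) - 1). *)

Section Defs.
Variable T : finType.

Definition union_V (l : nat) (N : nat -> {set T}) : {set T} :=
  \bigcup_(i < l) N i.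

Definition good_family (k l : nat) (N : nat -> {set T}) : Prop :=
  [/\ 3 <= k,
      forall i, i < l -> #|N i| = k,
      \bigcap_(i < l) N i = set0,
      forall i, i < l -> \bigcap_(r < l | nat_of_ord r != i) N r != set0 &
      forall S : {set T}, S \subset union_V l N -> k.+1 <= #|S| ->
        exists T3 : {set T},
          [/\ T3 \subset S, #|T3| = 3 & forall i, i < l -> ~~ (T3 \subset N i)]].

Definition kernel (L : nat -> nat) (a : nat -> nat -> T) (s : nat) : {set T} :=
  [set a s (nat_of_ord i) | i : 'I_(L s)].

Definition removed (L : nat -> nat) (a : nat -> nat -> T) (j : nat) : {set T} :=
  \bigcup_(s < j.+1) kernel L a s.

Definition trunc (N : nat -> {set T}) (L : nat -> nat) (a : nat -> nat -> T)
    (j r : nat) : {set T} :=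
  if j is j'.+1 then N r :\: removed L a j' else N r.

Definition min_empty (F : nat -> {set T}) (m : nat) (S : {set 'I_m}) : bool :=
  (\bigcap_(r in S) F (nat_of_ord r) == set0) &&
  [forall S' : {set 'I_m}, (S' \proper S) ==> (\bigcap_(r in S') F (nat_of_ord r) != set0)].

Definition is_run (l : nat) (N : nat -> {set T}) (t : nat) (L : nat -> nat)
    (a : nat -> nat -> T) : Prop :=
  [/\ L 0 = l,
      forall j i, j <= t -> i < L j ->
        a j i \in \bigcap_(r < L j | nat_of_ord r != i) trunc N L a j r,
      forall j, j < t ->
        [/\ L j.+1 <= L j, 4 <= L j.+1 &
            min_empty (fun r => N r :\: removed L a j) [set r : 'I_(L j) | r < L j.+1]] &
      forall S : {set 'I_(L t)},
        min_empty (fun r => N r :\: removed L a t) S -> #|S| = 2 \/ #|S| = 3].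

Definition garbage (l : nat) (N : nat -> {set T}) (t : nat) (L : nat -> nat)
    (a : nat -> nat -> T) : {set T} :=
  union_V l N :\: removed L a t.

Definition private_vertex (N : nat -> {set T}) (L : nat -> nat) (j i : nat) (v : T) :=
  v \in N i /\ forall r, r < L j -> r != i -> v \notin N r.

Definition private_pair (N : nat -> {set T}) (L : nat -> nat) (j i : nat) (p : {set T}) :=
  [/\ #|p| = 2, p \subset N i & forall r, r < L j -> r != i -> ~~ (p \subset N r)].

End Defs.

From mathcomp Require Import all_boot.
Set Implicit Arguments. Unset Strict Implicit. Unset Printing Implicit Defensive.

(* Every vertex of C outside N_i is a kernel vertex a_i^(s) with s <= j, and
   such a vertex lies in every N_r surviving at stage s, in particular in every
   N_r (r <> i) surviving at stage j.  Since C meets the complement of each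
   N_r, the part of C missing from N_r must lie in p = C /\ N_i: so p is not
   covered by any other survivor, which makes it nonempty and private; p is not
   all of C because C is not covered by N_i.  Finally a private vertex cannot be
   a kernel vertex a_i'^(s): one of N_0, N_1, N_2 (all survivors, as at least four
   sets survive every stage) has index r <> i, i' and contains a_i'^(s). *)

Lemma avoid2_lt3 (x y : nat) : exists2 r, r < 3 & (r != x) && (r != y).
Proof.
by case: x => [|[|x]]; case: y => [|[|y]]; by [exists 2 | exists 1 | exists 0].
Qed.

Lemma meets_setD_not_subset (T : finType) (C U M : {set T}) :
  C :&: (U :\: M) != set0 -> ~~ (C \subset M).
Proof.
case/set0Pn=> x; rewrite !inE => /and3P [xC xM _].
by apply/negP => /subsetP /(_ x xC); apply/negP.
Qed.

Lemma trunc_subset (T : finType) (N : nat -> {set T}) L a (s r : nat) :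
  trunc N L a s r \subset N r.
Proof. by case: s => [|s]; [exact: subxx | exact: subsetDl]. Qed.

Section Run.

Variables (T : finType) (l : nat) (N : nat -> {set T}).
Variables (t : nat) (L : nat -> nat) (a : nat -> nat -> T).
Hypothesis run : is_run l N t L a.

Lemma run_size_nonincreasing (s j : nat) : s <= j -> j <= t -> L j <= L s.
Proof.
have [_ _ step _] := run; elim: j => [|j IHj] sj jt; first by case: s sj.
rewrite leq_eqVlt in sj; case/predU1P: sj => [-> // | sj].
by have [Lj1 _ _] := step j jt; exact: leq_trans Lj1 (IHj sj (ltnW jt)).
Qed.

Lemma run_size_le (j : nat) : j <= t -> L j <= l.
Proof. by have [<- _ _ _] := run; exact: run_size_nonincreasing. Qed.

Hypothesis l_ge4 : 4 <= l.

Lemma run_size_ge4 (s : nat) : s <= t -> 4 <= L s.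
Proof.
have [L0 _ step _] := run; case: s => [|s] st; first by rewrite L0.
by have [] := step s st.
Qed.

Lemma kernel_vertex_in (s i' r : nat) :
  s <= t -> i' < L s -> r < L s -> r != i' -> a s i' \in N r.
Proof.
have [_ choice _ _] := run => st i's rs ri'.
have /bigcapP/(_ (Ordinal rs) ri') := choice s i' st i's.
exact: subsetP (trunc_subset N L a s r) _.
Qed.

Lemma kernel_vertex_not_private (s j i i' : nat) :
  s <= t -> j <= t -> i' < L s -> ~ private_vertex N L j i (a s i').
Proof.
move=> st jt i's [_ priv].
have [r r3 /andP [ri ri']] := avoid2_lt3 i i'.
have rLs : r < L s := leq_trans r3 (ltnW (run_size_ge4 st)).
have rLj : r < L j := leq_trans r3 (ltnW (run_size_ge4 jt)).
by have /negP := priv r rLj ri; rewrite kernel_vertex_in.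
Qed.

Lemma private_vertex_garbage (j i : nat) (v : T) :
  j <= t -> i < L j -> private_vertex N L j i v -> v \in garbage l N t L a.
Proof.
move=> jt iLj priv; have il : i < l := leq_trans iLj (run_size_le jt).
rewrite inE; apply/andP; split; last by apply/bigcupP; exists (Ordinal il); case: priv.
apply/negP => /bigcupP [[s /= st] _ /imsetP [i' _ vE]].
by rewrite vE in priv; exact: kernel_vertex_not_private st jt (ltn_ord i') priv.
Qed.

Section Trace.

Variables (j i : nat) (Y C : {set T}).
Hypotheses (jt : j <= t) (iLj : i < L j).
Hypothesis C_sub : C \subset (N i :|: [set a (nat_of_ord s) i | s : 'I_j.+1]) :\: Y.
Hypothesis C_uncovered : forall r, r < l -> C :&: (union_V l N :\: N r) != set0.

Let Ljl : L j <= l := run_size_le jt.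

Lemma trace_subset : C :&: N i \subset N i :\: Y.
Proof.
apply/subsetP=> x /setIP [xC xNi].
by move: (subsetP C_sub x xC); rewrite !inE xNi => /andP [-> _].
Qed.

Lemma outside_trace_subset (r : nat) : r < L j -> r != i -> C :\: N i \subset N r.
Proof.
move=> rLj ri; apply/subsetP=> x /setDP [xC xNi].
move: (subsetP C_sub x xC); rewrite !inE (negbTE xNi) => /andP [_ /imsetP [s _ ->]].
have sj : s <= j by rewrite -ltnS.
have Ljs := run_size_nonincreasing sj jt.
apply: kernel_vertex_in => //; first exact: leq_trans sj jt.
  exact: leq_trans iLj Ljs.
exact: leq_trans rLj Ljs.
Qed.

Lemma trace_not_subset (r : nat) : r < L j -> r != i -> ~~ (C :&: N i \subset N r).
Proof.
move=> rLj ri; have := meets_setD_not_subset (C_uncovered (leq_trans rLj Ljl)).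
apply: contra => pNr; rewrite -(setID C (N i)) subUset pNr.
exact: outside_trace_subset.
Qed.

Hypothesis C_card : #|C| = 3.

Lemma trace_card : #|C :&: N i| = 1 \/ #|C :&: N i| = 2.
Proof.
have [r r3 /andP [ri _]] := avoid2_lt3 i i.
have rLj : r < L j := leq_trans r3 (ltnW (run_size_ge4 jt)).
have p_gt0 : 0 < #|C :&: N i|.
  rewrite card_gt0; apply: contraNneq (trace_not_subset rLj ri) => ->.
  exact: sub0set.
have p_proper : C :&: N i \proper C.
  rewrite properEneq subsetIl andbT.
  apply: contraNneq (meets_setD_not_subset (C_uncovered (leq_trans iLj Ljl))) => <-.
  exact: subsetIr.
have := proper_card p_proper; rewrite C_card.
by case: #|_| p_gt0 => [|[|[|n]]] //; [left | right].
Qed.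

Lemma trace_private_vertex (v : T) : C :&: N i = [set v] -> private_vertex N L j i v.
Proof.
move=> pv; have /setIP [_ vNi] : v \in C :&: N i by rewrite pv set11.
split=> // r rLj ri; have := trace_not_subset rLj ri.
by rewrite pv sub1set.
Qed.

Lemma trace_private_pair : #|C :&: N i| = 2 -> private_pair N L j i (C :&: N i).
Proof. by split; [| exact: subsetIr | exact: trace_not_subset]. Qed.

End Trace.

End Run.

Theorem lemma4 (T : finType) (k l : nat) (N : nat -> {set T})
    (t : nat) (L : nat -> nat) (a : nat -> nat -> T)
    (j i : nat) (Y C : {set T}) :
  good_family k l N -> 4 <= l -> is_run l N t L a ->
  j <= t -> i < L j ->
  Y \subset N i -> #|Y| <= j ->
  #|C| = 3 ->
  C \subset (N i :|: [set a (nat_of_ord s) i | s : 'I_j.+1]) :\: Y ->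
  (forall r, r < l -> C :&: (union_V l N :\: N r) != set0) ->
  let p := C :&: N i in
  [/\ #|p| = 1 \/ #|p| = 2,
      forall v, p = [set v] ->
        v \in (N i :\: Y) :&: garbage l N t L a /\ private_vertex N L j i v &
      #|p| = 2 -> p \subset N i :\: Y /\ private_pair N L j i p].
Proof.
move=> _ l4 run jt iLj _ _ C3 C_sub C_uncovered p; rewrite {}/p.
have p_sub := trace_subset C_sub.
split; first exact: (trace_card run l4 jt iLj C_sub C_uncovered C3).
- move=> v pv; have priv := trace_private_vertex run jt iLj C_sub C_uncovered pv.
  split=> //; rewrite inE (subsetP p_sub) ?pv ?set11 //=.
  exact: (private_vertex_garbage run l4 jt iLj priv).
- by move=> p2; split=> //; exact: (trace_private_pair run jt iLj C_sub C_uncovered p2).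
Qed.
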